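(* Let $n$ be even and let $G$ be a $k$-regular graph on $n$ vertices with $\mu(G)<k$. Then $n\ge 3k-2$. If moreover $n\le 3k-1$, then $\mu(G)=k-1$.
   Context: All graphs are finite and simple. For a graph $G=(V,E)$ on $n$ vertices, a fractional vertex cover is a function $f:V\to[0,\infty)$ with $f(u)+f(v)\ge 1$ for every edge $uv\in E$; $\tau^*(G)$ denotes the minimum of $\sum_{v\in V}f(v)$ over all fractional vertex covers. For $E'\subseteq E$ let $G-E'=(V,E\setminus E')$. Define $\mu(G)=\min\{|E'| : E'\subseteq E,\ \tau^*(G-E')<n/2\}$. *)

From mathcomp Require Import all_boot all_order all_algebra.
From mathcomp Require Import boolp classical_sets reals.
Set Implicit Arguments. Unset Strict Implicit. Unset Printing Implicit Defensive.
Import Order.TTheory GRing.Theory Num.Theory.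
Local Open Scope ring_scope.

Definition simple_graph (T : finType) (e : rel T) : Prop :=
  symmetric e /\ irreflexive e.

Definition edges (T : finType) (e : rel T) : {set {set T}} :=
  [set A : {set T} | [exists u, exists v, e u v && (A == [set u; v])]].

Definition regular (T : finType) (e : rel T) (k : nat) : Prop :=
  forall v : T, #|[set u | e v u]| = k.

Definition del_edges (T : finType) (e : rel T) (E' : {set {set T}}) : rel T :=
  fun u v => e u v && ([set u; v] \notin E').

Definition frac_cover (R : realType) (T : finType) (e : rel T) (f : T -> R) : Prop :=
  (forall v, 0 <= f v) /\ (forall u v, e u v -> 1 <= f u + f v).

(* tau*(G): the minimum (= infimum, attained) of the total weight of
   fractional vertex covers *)
Definition tau_star (R : realType) (T : finType) (e : rel T) : R :=
  inf (fun s : R => exists f : T -> R, frac_cover e f /\ s = \sum_(v : T) f v).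

Definition mu_feasible (R : realType) (T : finType) (e : rel T) (E' : {set {set T}}) : Prop :=
  E' \subset edges e /\ tau_star R (del_edges e E') < (#|T|%:R / 2).

Definition mu_is (R : realType) (T : finType) (e : rel T) (m : nat) : Prop :=
  (exists E', mu_feasible R e E' /\ #|E'| = m) /\
  (forall E', mu_feasible R e E' -> (m <= #|E'|)%N).

(* Take a feasible E' with |E'| = m < k and a fractional cover f of G - E' of
   weight < n/2, and put h = f - 1/2.  Some threshold t > 0 has more vertices with
   h <= -t than with h >= t: otherwise cancelling the most negative value of h
   against a value at least as large, and repeating, shows sum h >= 0.  The two
   level sets S and N are disjoint, |N| < |S|, and every edge of G - E' leaving S
   ends in N, so all edges from S to the rest of the graph lie in E'.  Double
   counting degrees of the k-regular graph G over S, N and the remaining part R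
   then forces |S| = |N| + 1, |R| > k (here n even is used) and
   (|N| + 1)(k - |N|) <= 2m, from which both bounds follow. *)

From mathcomp Require Import boolp classical_sets reals.
From mathcomp Require Import all_boot all_order all_algebra.
From mathcomp Require Import zify lra.

Set Implicit Arguments. Unset Strict Implicit. Unset Printing Implicit Defensive.
Import Order.TTheory GRing.Theory Num.Theory.

Section LevelSets.
Local Open Scope ring_scope.
Variables (R : realFieldType) (T : finType).
Implicit Types h : T -> R.

Definition below h t := [set v | h v <= - t].
Definition above h t := [set v | t <= h v].

Definition level_balanced h := forall t, 0 < t -> (#|below h t| <= #|above h t|)%N.

Definition transfer h v0 w : T -> R :=
  fun v => if v == v0 then 0 else if v == w then h w + h v0 else h v.

Section Transfer.
Variables (h : T -> R) (v0 w : T).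
Hypotheses (v0_min : forall v, h v0 <= h v) (v0_lt0 : h v0 < 0) (w_ge : - h v0 <= h w).

Lemma transfer_neq : w != v0.
Proof. by apply: contraTneq w_ge => ->; rewrite -ltNge; move: v0_lt0; lra. Qed.

Lemma sum_transfer : \sum_v transfer h v0 w v = \sum_v h v.
Proof.
have wv0 := transfer_neq.
rewrite (bigD1 v0) //= [RHS](bigD1 v0) //= (bigD1 w) //= [in RHS](bigD1 w) //=.
rewrite /transfer eqxx (negbTE wv0) eqxx add0r addrA [h v0 + _]addrC.
congr (_ + _); apply: eq_bigr => v /andP[nv0 nw].
by rewrite (negbTE nv0) (negbTE nw).
Qed.

Lemma card_lt0_transfer :
  (#|[set v | (transfer h v0 w v < 0)%R]| < #|[set v | (h v < 0)%R]|)%N.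
Proof.
rewrite (cardsD1 v0 [set v | h v < 0]) inE v0_lt0 add1n ltnS.
apply/subset_leq_card/subsetP => v; rewrite !inE /transfer.
case: eqVneq => [_|_]; first by rewrite ltxx.
by case: eqVneq => [->|//] /=; move: w_ge; lra.
Qed.

Lemma level_balanced_transfer : level_balanced h -> level_balanced (transfer h v0 w).
Proof.
move=> hb t t_gt0; case: (leP t (- h v0)) => [t_le | t_gt]; last first.
  suff -> : below (transfer h v0 w) t = set0 by rewrite cards0.
  apply/setP => v; rewrite !inE; apply/negbTE; rewrite -ltNge /transfer.
  case: eqVneq => [_|_]; first by move: t_gt0; lra.
  by case: eqVneq => [_|_]; move: (v0_min v) w_ge t_gt; lra.
have sub_below : below (transfer h v0 w) t \subset below h t :\ v0.
  apply/subsetP => v; rewrite !inE /transfer.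
  case: eqVneq => [_|_] /=; first by move: t_gt0; lra.
  by case: eqVneq => [->|//]; move: t_gt0 w_ge; lra.
have sub_above : above h t :\ w \subset above (transfer h v0 w) t.
  apply/subsetP => v; rewrite !inE /transfer.
  case: eqVneq => [->|_] //=.
  by case: eqVneq => [->|//]; move: t_gt0 v0_lt0; lra.
have := hb t t_gt0.
rewrite (cardsD1 v0 (below h t)) (cardsD1 w (above h t)) !inE.
have -> : h v0 <= - t by move: t_le; lra.
have -> : t <= h w by move: t_le w_ge; lra.
rewrite !add1n ltnS => le_card.
exact: leq_trans (subset_leq_card sub_below) (leq_trans le_card (subset_leq_card sub_above)).
Qed.

End Transfer.

Lemma sum_ge0_level_balanced h : level_balanced h -> 0 <= \sum_v h v.
Proof.
have [n] := ubnP #|[set v | (h v < 0)%R]|; elim: n h => // n IH h /ltnSE lt_n hb.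
case: (pickP (fun v => h v < 0)) => [v1 v1_lt0 | h_ge0]; last first.
  by apply: sumr_ge0 => v _; rewrite leNgt h_ge0.
have [v0 _ v0_min] := @arg_minP _ R T v1 predT h isT.
have {}v0_min v : h v0 <= h v by exact: v0_min.
have v0_lt0 : h v0 < 0 by apply: le_lt_trans (v0_min v1) v1_lt0.
have [w] : exists w, - h v0 <= h w.
  have : (0 < #|above h (- h v0)|)%N.
    apply: leq_trans (hb _ _); last by move: v0_lt0; lra.
    by apply/card_gt0P; exists v0; rewrite inE opprK.
  by case/card_gt0P => w; rewrite inE; exists w.
move=> w_ge; rewrite -(sum_transfer v0_lt0 w_ge).
apply: IH; first exact: leq_trans (card_lt0_transfer v0_lt0 w_ge) lt_n.
exact: level_balanced_transfer.
Qed.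

End LevelSets.

Section FractionalCover.
Local Open Scope ring_scope.

Lemma deficient_set_of_tau_star_lt (R : realType) (T : finType) (g : rel T) :
  tau_star R g < #|T|%:R / 2 ->
  exists S N : {set T},
    [/\ [disjoint S & N], (#|N| < #|S|)%N & forall u v, u \in S -> g u v -> v \in N].
Proof.
move=> tau_lt.
have covers0 : ((fun s : R => exists f, frac_cover g f /\ s = \sum_v f v) !=set0)%classic.
  by exists (\sum_(v : T) 1); exists (fun=> 1); split=> //; split=> [v|u v _]; lra.
have [_ [f [[f_ge0 f_cover] ->]] sum_lt] := inf_lt covers0 tau_lt.
pose h v := f v - 2^-1.
have /existsNP[t /not_implyP[t_gt0 /negP]] : ~ level_balanced h.
  move=> /sum_ge0_level_balanced; apply/negP; rewrite -ltNge.
  by rewrite sumrB sumr_const -(mulr_natr (2^-1 : R)) mulrC subr_lt0.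
rewrite -ltnNge => lt_card.
exists (below h t), (above h t); split => //.
- rewrite -setI_eq0; apply/eqP/setP => v; rewrite !inE; apply/negbTE/negP => /andP[].
  by move: t_gt0; lra.
- by move=> u v; rewrite !inE /h => hu /f_cover; move: hu; lra.
Qed.

End FractionalCover.

Section EdgeCount.
Variables (T : finType) (r : rel T).
Implicit Types A B C : {set T}.

Definition ecount A B : nat := \sum_(a in A) \sum_(b in B) r a b.

Lemma ecount_le_mul A B : ecount A B <= #|A| * #|B|.
Proof.
rewrite -sum_nat_const; apply: leq_sum => a _.
by rewrite -sum1_card; apply: leq_sum => b _; case: (r a b).
Qed.

Lemma ecount_irr_le A : irreflexive r -> ecount A A <= #|A| * #|A|.-1.
Proof.
move=> rirr; rewrite -sum_nat_const; apply: leq_sum => a aA.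
rewrite (big_setD1 a aA) rirr (cardsD1 a A) aA -sum1_card.
by apply: leq_sum => b _; case: (r a b).
Qed.

Lemma ecountC A B : symmetric r -> ecount A B = ecount B A.
Proof.
move=> rsym; rewrite /ecount exchange_big.
by apply: eq_bigr => b _; apply: eq_bigr => a _; rewrite rsym.
Qed.

Lemma ecount_setIDl A B C : ecount A B = ecount (A :&: C) B + ecount (A :\: C) B.
Proof. exact: big_setID. Qed.

Lemma ecount_setIDr A B C : ecount A B = ecount A (B :&: C) + ecount A (B :\: C).
Proof. by rewrite /ecount -big_split; apply: eq_bigr => a _; apply: big_setID. Qed.

Lemma ecount_subset A A' B B' :
  A \subset A' -> B \subset B' -> ecount A B <= ecount A' B'.
Proof.
move=> /setIidPr sAA' /setIidPr sBB'.
rewrite [leqRHS](ecount_setIDl _ _ A) sAA' (ecount_setIDr A B' B) sBB'.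
by rewrite -addnA leq_addr.
Qed.

End EdgeCount.

Lemma ecount_mono (T : finType) (r r' : rel T) (A B : {set T}) :
  (forall a b, a \in A -> b \in B -> r a b -> r' a b) -> ecount r A B <= ecount r' A B.
Proof.
move=> rr'; apply: leq_sum => a aA; apply: leq_sum => b bB.
by case: (r a b) (rr' a b aA bB) => // ->.
Qed.

Lemma sum_rel_card (T : finType) (r : rel T) a :
  \sum_(b in [set: T]) r a b = #|[set b | r a b]|.
Proof.
rewrite -sum1dep_card big_mkcond [RHS]big_mkcond.
by apply: eq_bigr => b _; rewrite inE; case: (r a b).
Qed.

Lemma ecount_regular (T : finType) (r : rel T) (A : {set T}) k :
  regular r k -> ecount r A [set: T] = #|A| * k.
Proof.
move=> rreg; rewrite -sum_nat_const; apply: eq_bigr => a _.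
by rewrite sum_rel_card rreg.
Qed.

Definition removed (T : finType) (e : rel T) (E' : {set {set T}}) : rel T :=
  fun u v => e u v && ([set u; v] \in E').

Lemma removedC (T : finType) (e : rel T) (E' : {set {set T}}) :
  symmetric e -> symmetric (removed e E').
Proof. by move=> esym u v; rewrite /removed esym setUC. Qed.

Lemma sum_card_mem (T : finType) (F : {set {set T}}) :
  \sum_(u in [set: T]) #|[set A in F | u \in A]| = \sum_(A in F) #|A|.
Proof.
have sum_mem u : #|[set A in F | u \in A]| = \sum_(A in F) (u \in A).
  rewrite -sum1_card big_mkcond [RHS]big_mkcond.
  by apply: eq_bigr => A _; rewrite inE; case: (A \in F); case: (u \in A).
under eq_bigr do rewrite sum_mem.
rewrite exchange_big; apply: eq_bigr => A _.
rewrite -sum1_card big_mkcond [RHS]big_mkcond.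
by apply: eq_bigr => u _; rewrite !inE; case: (u \in A).
Qed.

Lemma ecount_removed_le (T : finType) (e : rel T) (E' : {set {set T}}) :
  irreflexive e -> E' \subset edges e ->
  ecount (removed e E') [set: T] [set: T] <= 2 * #|E'|.
Proof.
move=> eirr Esub.
have deg_le u : \sum_(v in [set: T]) removed e E' u v <= #|[set A in E' | u \in A]|.
  rewrite sum_rel_card -(@card_in_imset _ _ (fun v => [set u; v])); last first.
    move=> v1 v2; rewrite !inE => /andP[euv1 _] _ eq12.
    have : v1 \in [set u; v2] by rewrite -eq12 set22.
    by rewrite !inE => /orP[/eqP v1u | /eqP //]; rewrite v1u eirr in euv1.
  apply/subset_leq_card/subsetP => ? /imsetP[v]; rewrite !inE => /andP[_ uvE] ->.
  by rewrite uvE set21.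
apply: (@leq_trans (\sum_(u in [set: T]) #|[set A in E' | u \in A]|)).
  by apply: leq_sum => u _; exact: deg_le.
rewrite sum_card_mem mulnC -sum_nat_const; apply: leq_sum => A /(subsetP Esub).
by rewrite inE => /existsP[u /existsP[v /andP[_ /eqP ->]]]; rewrite cards2; case: (u != v).
Qed.

(* Q, D, X, W stand for the ordered edge counts e(S,N), e(N,R), e(S,V\N), e(S,R)
   and s, p, r for |S|, |N|, |R|, where V = S + N + R. *)
Lemma deficient_count_arith (k m s p r Q D X W : nat) :
  p < s -> m < k -> ~~ odd (s + p + r) ->
  s * k = Q + X -> Q <= s * p -> Q + D <= p * k -> r * k <= D + W + r * r.-1 ->
  X + W <= 2 * m -> X <= s * s.-1 + W ->
  3 * k - 2 <= s + p + r /\ (s + p + r <= 3 * k - 1 -> k - 1 <= m).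
Proof.
move=> ltps ltmk even_n degS QS QN degR XW_le X_le.
have k_gt0 : 0 < k by lia.
have {ltps} s_eq : s = p.+1.
  have : (s - p) * k < 2 * k by rewrite mulnBl; lia.
  by rewrite ltn_pmul2r //; lia.
subst s.
have r_gt0 : 0 < r.
  by move: even_n; rewrite lt0n; apply: contraNneq => ->; rewrite addn0 addSn addnn /= odd_double.
have ltkr : k < r.
  have : r * k + 2 <= k + r * r.-1 by rewrite mulSn in degS; lia.
  case: (ltnP k r) => // lerk.
  have [j ->] : exists j, k = r + j by exists (k - r); lia.
  by case: r r_gt0 {degR even_n lerk} => // r' _ /=; nia.
have p_gt0 : 0 < p.
  by rewrite lt0n; apply/negP => /eqP p0; subst p; lia.
have degSp : p.+1 * (k - p) <= X by rewrite mulnBr; lia.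
split.
- case: (leqP (k - 2) p) => [|ltpk]; first lia.
  have [p1 | p_ge2] : p = 1 \/ 1 < p by lia.
  + by subst p; lia.
  + have [j kE] : exists j, k = p + 3 + j by exists (k - p - 3); lia.
    subst k; rewrite -addnA addKn in degSp.
    have : p.+1 * (3 + j) <= 2 * (p + 2 + j) by lia.
    by clear -p_ge2; nia.
- move=> n_le; have [j kE] : exists j, k = p + 2 + j by exists (k - p - 2); lia.
  subst k; rewrite -addnA addKn in degSp.
  have : p.+1 * (2 + j) <= 2 * m by lia.
  by clear -p_gt0; nia.
Qed.

Section DeficientSet.
Variables (T : finType) (e : rel T) (k : nat) (E' : {set {set T}}) (S N : {set T}).
Hypotheses (esym : symmetric e) (eirr : irreflexive e) (ereg : regular e k).
Hypotheses (Esub : E' \subset edges e) (SN : [disjoint S & N]).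
Hypothesis S_closed : forall u v, u \in S -> del_edges e E' u v -> v \in N.

Let R := ~: (S :|: N).

Lemma removed_out_of_S u v : u \in S -> v \notin N -> e u v -> removed e E' u v.
Proof.
move=> uS vN euv; rewrite /removed euv /=; apply: contraNT vN => vE.
by apply: S_closed uS _; rewrite /del_edges euv vE.
Qed.

Lemma setCN_S : ~: N :&: S = S.
Proof. by apply/setIidPr; rewrite -disjoints_subset. Qed.

Lemma setCN_R : ~: N :\: S = R.
Proof. by rewrite /R setCU setDE setIC. Qed.

Lemma card_deficient_partition : #|T| = #|S| + #|N| + #|R|.
Proof. by rewrite -(cardsC (S :|: N)) cardsU (disjoint_setI0 SN) cards0 subn0. Qed.

Lemma ecount_S_degree : #|S| * k = ecount e S N + ecount e S (~: N).
Proof. by rewrite -(ecount_regular S ereg) (ecount_setIDr _ _ _ N) setTI setTD. Qed.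

Lemma ecount_N_degree : ecount e S N + ecount e N R <= #|N| * k.
Proof.
rewrite -(ecount_regular N ereg) (ecount_setIDr _ N [set: T] S) setTI setTD ecountC //.
by rewrite leq_add2l ecount_subset // /R setCU subsetIl.
Qed.

Lemma ecount_R_degree : #|R| * k <= ecount e N R + ecount e S R + #|R| * #|R|.-1.
Proof.
rewrite -(ecount_regular R ereg) (ecount_setIDr _ R [set: T] N) setTI setTD.
rewrite (ecount_setIDr _ R (~: N) S) setCN_S setCN_R !(ecountC _ R) // addnA.
by rewrite leq_add2l ecount_irr_le.
Qed.

Lemma ecount_S_inside : ecount e S (~: N) <= #|S| * #|S|.-1 + ecount e S R.
Proof.
by rewrite (ecount_setIDr _ S (~: N) S) setCN_S setCN_R leq_add2r ecount_irr_le.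
Qed.

Lemma ecount_S_removed : ecount e S (~: N) + ecount e S R <= 2 * #|E'|.
Proof.
have R_subCS : R \subset ~: S by rewrite /R setCU subsetIl.
have S_removed (B : {set T}) : B \subset ~: N -> ecount e S B <= ecount (removed e E') S B.
  move=> /subsetP sBN; apply: ecount_mono => u v uS /sBN.
  by rewrite inE; exact: removed_out_of_S.
apply: leq_trans (ecount_removed_le eirr Esub).
rewrite (ecount_setIDl _ [set: T] [set: T] S) setTI setTD.
apply: leq_add; apply: leq_trans (S_removed _ _) _ => //.
- exact: ecount_subset.
- by rewrite /R setCS subsetUr.
- by rewrite ecountC; [apply: ecount_subset | exact: removedC].
Qed.

Lemma regular_deficient_bound : #|N| < #|S| -> #|E'| < k -> ~~ odd #|T| ->
  3 * k - 2 <= #|T| /\ (#|T| <= 3 * k - 1 -> k - 1 <= #|E'|).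
Proof.
rewrite card_deficient_partition => ltNS ltEk even_n.
apply: (deficient_count_arith ltNS ltEk even_n ecount_S_degree) ecount_N_degree
  ecount_R_degree ecount_S_removed ecount_S_inside.
exact: ecount_le_mul.
Qed.

End DeficientSet.

Theorem lemma27 (R : realType) (T : finType) (e : rel T) (k m : nat) :
  simple_graph e -> ~~ odd #|T| -> regular e k ->
  mu_is R e m -> (m < k)%N ->
  (3 * k - 2 <= #|T|)%N /\ ((#|T| <= 3 * k - 1)%N -> m = (k - 1)%N).
Proof.
move=> [esym eirr] even_n ereg [[E' [[Esub tau_lt] <-]] _] ltEk.
have [S [N [SN ltNS S_closed]]] := deficient_set_of_tau_star_lt tau_lt.
have [lower upper] :=
  regular_deficient_bound esym eirr ereg Esub SN S_closed ltNS ltEk even_n.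
by split=> // /upper; lia.
Qed.
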